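(* Let $A\in\mathbb{R}^{d\times n}$ have first column identically zero, i.e. $A_{i,1}=0$ for all $i\in[d]$. For each integer $j\ge0$ and $k\in\{0,1,\dots,\log n\}$, let $b_{j,k}\in\mathbb{R}^d$ be column $1+2^k j$ of $A$, with $b_{j,k}$ the zero vector if $1+2^kj>n$. Then: (1) for each $i\in[d]$, $\max_{j\in[n]}A_{i,j}^2\le(\log n)\sum_{k=0}^{\log n}\sum_{j=2}^{n+1}\big((b_{j,k})_i-(b_{j-1,k})_i\big)^2$; (2) $\sum_{i=1}^d\max_{j\in[n]}A_{i,j}^2\le(\log n)\sum_{k=0}^{\log n}\sum_{j=2}^{n+1}\|b_{j,k}-b_{j-1,k}\|_2^2$.
   Context: Here $\log$ denotes the base-2 logarithm and $n$ is a power of $2$, so that $\log n$ is an integer. *)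

From mathcomp Require Import all_boot all_order all_algebra.
Set Implicit Arguments. Unset Strict Implicit. Unset Printing Implicit Defensive.
Import Order.TTheory GRing.Theory Num.Theory.
Local Open Scope ring_scope.

(* Columns are indexed 0-based: paper's column c (1-based) is index c-1.
   [colent A i c] = A_{i, c+1} (paper indexing) if c < n, and 0 otherwise. *)
Definition colent (R : ringType) (d n : nat) (A : 'M[R]_(d, n)) (i : 'I_d) (c : nat) : R :=
  match @insub nat (fun x => x < n)%N 'I_n c with
  | Some c' => A i c'
  | None => 0
  end.

(* b_{j,k} = column 1 + 2^k j of A (paper, 1-based), zero if 1 + 2^k j > n;
   i.e. 0-based column index 2^k * j. *)
Definition bvec (R : ringType) (d n : nat) (A : 'M[R]_(d, n)) (j k : nat) : 'cV[R]_d :=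
  \col_i colent A i (2 ^ k * j)%N.

Definition norm2sq (R : ringType) (d : nat) (v : 'cV[R]_d) : R :=
  \sum_(i < d) (v i 0) ^+ 2.

(* max_{j in [n]} A_{i,j}^2 (entries are nonnegative so 0 is a neutral start) *)
Definition rowmaxsq (R : realDomainType) (d n : nat) (A : 'M[R]_(d, n)) (i : 'I_d) : R :=
  \big[Num.max/0]_(j < n) (A i j) ^+ 2.

(** To bound A_{i,c}^2, walk from column index c to index n = 2^m, where the
    entry vanishes: at level k the current index is 2^k q, and if q is odd one
    step moves it to 2^k (q+1), a difference occurring in the level-k energy;
    either way the index becomes a multiple of 2^(k+1). Thus A_{i,c} is a sum
    of at most m differences, one per level, and Cauchy-Schwarz (proved level
    by level as [sqrD_le_succ_mul]) gives (1). *)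

From mathcomp Require Import all_boot all_order all_algebra.
From mathcomp Require Import zify lra.
Set Implicit Arguments. Unset Strict Implicit. Unset Printing Implicit Defensive.
Import Order.TTheory GRing.Theory Num.Theory.
Local Open Scope ring_scope.

Lemma colent_out (R : nzRingType) (d n : nat) (A : 'M[R]_(d, n)) i x :
  (n <= x)%N -> colent A i x = 0.
Proof. by move=> h; rewrite /colent insubF // ltnNge h. Qed.

Lemma colent_ord (R : nzRingType) (d n : nat) (A : 'M[R]_(d, n)) i (c : 'I_n) :
  colent A i c = A i c.
Proof. by rewrite /colent valK. Qed.

Lemma ler_term_sum_nat (R : numDomainType) (a b j0 : nat) (F : nat -> R) :
  (forall j, 0 <= F j) -> (a <= j0 < b)%N -> F j0 <= \sum_(a <= j < b) F j.
Proof.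
move=> F_ge0 j0_in; rewrite (bigD1_seq j0) ?mem_index_iota ?iota_uniq //=.
by rewrite lerDl sumr_ge0.
Qed.

Lemma sqrD_le_succ_mul (R : realDomainType) (T a b D S : R) :
  0 <= T -> 0 <= S -> a ^+ 2 <= D -> b ^+ 2 <= T * S ->
  (a + b) ^+ 2 <= (T + 1) * (D + S).
Proof.
move=> T_ge0 S_ge0 aD bTS; have [T0|T_gt0] := eqVneq T 0.
  rewrite T0 mul0r in bTS.
  have b0 : b = 0 by apply/eqP; rewrite -sqrf_eq0 eq_le sqr_ge0 bTS.
  by rewrite T0 b0 addr0 add0r mul1r; lra.
have {}T_gt0 : 0 < T by rewrite lt_def T_gt0.
(* T ((T+1)(D+S) - (a+b)^2) = T(T+1)(D - a^2) + (T+1)(TS - b^2) + (Ta - b)^2 *)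
rewrite -(ler_pM2l T_gt0).
have := sqr_ge0 (T * a - b).
have : 0 <= T * (T + 1) * (D - a ^+ 2).
  by rewrite mulr_ge0 ?subr_ge0 // mulr_ge0 // addr_ge0.
have : 0 <= (T + 1) * (T * S - b ^+ 2) by rewrite mulr_ge0 ?subr_ge0 // addr_ge0.
nra.
Qed.

Definition dyadic_energy (R : nzRingType) (f : nat -> R) (N k : nat) : R :=
  \sum_(2 <= j < N.+2) (f (2 ^ k * j)%N - f (2 ^ k * j.-1)%N) ^+ 2.

Lemma dyadic_energy_ge0 (R : realDomainType) (f : nat -> R) N k :
  0 <= dyadic_energy f N k.
Proof. by apply: sumr_ge0 => j _; apply: sqr_ge0. Qed.

Lemma sqr_dyadic_step_le (R : realDomainType) (f : nat -> R) N k q :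
  (0 < q <= N)%N -> (f (2 ^ k * q)%N - f (2 ^ k * q.+1)%N) ^+ 2 <= dyadic_energy f N k.
Proof.
move=> q_in; rewrite -sqrrN opprB.
by apply: (ler_term_sum_nat (j0 := q.+1)) => [j|]; [apply: sqr_ge0 | lia].
Qed.

Section DyadicTelescoping.
Variables (R : realDomainType) (f : nat -> R) (m : nat).
Hypothesis f_top : f (2 ^ m)%N = 0.
Local Notation E := (dyadic_energy f (2 ^ m)).

Lemma sqr_le_dyadic_energy_from t k q : (k + t = m)%N -> (0 < q <= 2 ^ t)%N ->
  f (2 ^ k * q)%N ^+ 2 <= t%:R * \sum_(k <= l < m) E l.
Proof.
elim: t k q => [|t IH] k q km q_in.
  have -> : q = 1%N by move: q_in; rewrite expn0; lia.
  by rewrite addn0 in km; rewrite muln1 km f_top expr0n mul0r.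
have pow_km : (2 ^ m = 2 ^ k * 2 ^ t.+1)%N by rewrite -km expnD.
have pow_k_gt0 : (0 < 2 ^ k)%N by rewrite expn_gt0.
have halve : (2 ^ k.+1 * uphalf q = 2 ^ k * (q + odd q))%N.
  by rewrite expnS -mulnA mulnCA mul2n uphalfK addnC.
have uphalf_in : (0 < uphalf q <= 2 ^ t)%N.
  by rewrite uphalf_gt0 leq_uphalf_double -muln2 -expnSr.
have := IH k.+1 (uphalf q) ltac:(lia) uphalf_in; rewrite halve => IHq.
have step : (f (2 ^ k * q)%N - f (2 ^ k * (q + odd q))%N) ^+ 2 <= E k.
  case: (odd q); last by rewrite addn0 subrr expr0n dyadic_energy_ge0.
  by rewrite addn1; apply: sqr_dyadic_step_le; nia.
rewrite -[f _](subrK (f (2 ^ k * (q + odd q))%N)) -natr1 big_ltn; last by lia.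
apply: sqrD_le_succ_mul => //.
by apply: sumr_ge0 => l _; apply: dyadic_energy_ge0.
Qed.

Lemma sqr_le_dyadic_energy c : f 0 = 0 -> (c <= 2 ^ m)%N ->
  f c ^+ 2 <= m%:R * \sum_(0 <= k < m.+1) E k.
Proof.
move=> f0 c_le; have [->|c_gt0] := posnP c.
  by rewrite f0 expr0n mulr_ge0 ?sumr_ge0 // => k _; apply: dyadic_energy_ge0.
have := @sqr_le_dyadic_energy_from m 0 c (add0n m); rewrite expn0 mul1n.
move=> /(_ ltac:(lia)) /le_trans; apply; rewrite ler_wpM2l // big_nat_recr //=.
by rewrite lerDl dyadic_energy_ge0.
Qed.

End DyadicTelescoping.

Section MatrixColumns.
Variables (R : realDomainType) (d m : nat) (A : 'M[R]_(d, 2 ^ m)).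

Lemma dyadic_energy_colent i k :
  dyadic_energy (colent A i) (2 ^ m) k =
  \sum_(2 <= j < (2 ^ m).+2) ((bvec A j k) i 0 - (bvec A j.-1 k) i 0) ^+ 2.
Proof. by apply: eq_bigr => j _; rewrite !mxE. Qed.

Lemma sum_dyadic_energy_colent k :
  \sum_(i < d) dyadic_energy (colent A i) (2 ^ m) k =
  \sum_(2 <= j < (2 ^ m).+2) norm2sq (bvec A j k - bvec A j.-1 k).
Proof.
rewrite exchange_big; apply: eq_bigr => j _.
by apply: eq_bigr => i _; rewrite !mxE.
Qed.

Lemma rowmaxsq_le_dyadic_energy i : colent A i 0 = 0 ->
  rowmaxsq A i <= m%:R * \sum_(0 <= k < m.+1) dyadic_energy (colent A i) (2 ^ m) k.
Proof.
move=> A_i0; apply: bigmax_le => [|c _].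
  by rewrite mulr_ge0 ?sumr_ge0 // => k _; apply: dyadic_energy_ge0.
rewrite -colent_ord; apply: sqr_le_dyadic_energy => //; last exact: ltnW.
exact: colent_out.
Qed.

End MatrixColumns.

(* n = 2 ^ m, so log n = m. *)
Theorem lemmaC4 (R : realFieldType) (d m : nat) (A : 'M[R]_(d, 2 ^ m))
  (hA : forall i : 'I_d, colent A i 0 = 0) :
  (forall i : 'I_d,
     rowmaxsq A i <=
     m%:R * \sum_(0 <= k < m.+1) \sum_(2 <= j < (2 ^ m).+2)
              ((bvec A j k) i 0 - (bvec A j.-1 k) i 0) ^+ 2)
  /\
  \sum_(i < d) rowmaxsq A i <=
     m%:R * \sum_(0 <= k < m.+1) \sum_(2 <= j < (2 ^ m).+2)
              norm2sq (bvec A j k - bvec A j.-1 k).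
Proof.
split=> [i|].
  under eq_bigr => k _ do rewrite -dyadic_energy_colent.
  exact: rowmaxsq_le_dyadic_energy.
under [in X in _ <= X]eq_bigr => k _ do rewrite -sum_dyadic_energy_colent.
rewrite exchange_big mulr_sumr; apply: ler_sum => i _.
exact: rowmaxsq_le_dyadic_energy.
Qed.
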